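(* For each $\otimes\in\{\mathrm{del},\mathrm{add},\mathrm{edit}\}$, $\textsc{RM}^{\otimes}_{\mathrm{basic}}(aa)\subseteq\mathrm{TC}^0$; i.e. for every sentence $\phi=\forall x\forall y\,\psi$ with $\psi$ quantifier-free over $\{E\}$, $\textsc{RM}^{\otimes}_{\mathrm{basic}}(\phi)\in\mathrm{TC}^0$.
   Context: A basic graph is $(V,E)$ with $E\subseteq V\times V$ symmetric and irreflexive. For $S\subseteq V\times V$, $\|S\|=|\{\{u,v\}:(u,v)\in S\}|$. For a first-order sentence $\phi$ over $\{E\}$, $\textsc{RM}^{\mathrm{edit}}_{\mathrm{basic}}(\phi)$: given a basic graph $(V,E)$ and $k\in\mathbb N$, is there $S$ with $\|S\|\le k$ such that $(V,E\triangle S)$ is a basic graph satisfying $\phi$; del (resp. add) versions require $S\subseteq E$ (resp. $S\cap E=\emptyset$). $\mathrm{TC}^0$: problems decided by constant-depth polynomial-size unbounded fan-in circuits with and/or/not and threshold gates. *)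

From mathcomp Require Import all_boot.
Set Implicit Arguments. Unset Strict Implicit. Unset Printing Implicit Defensive.

(* Variables are de Bruijn indices: FAll/FEx bind index 0. *)
Inductive form : Type :=
| FE  : nat -> nat -> form
| FEq : nat -> nat -> form
| FNot : form -> form
| FAnd : form -> form -> form
| FOr  : form -> form -> form
| FAll : form -> form
| FEx  : form -> form.

(* satisfaction in the structure (V, E) under the assignment env : seq V,
   where variable i denotes the i-th entry of env (atoms mentioning an
   unassigned variable are false; this never happens for sentences). *)
Fixpoint sat (V : Type) (E : V -> V -> bool) (env : seq V) (f : form) : Prop :=
  match f with
  | FE i j => match onth env i, onth env j with
              | Some u, Some v => E u v | _, _ => False end
  | FEq i j => match onth env i, onth env j with
              | Some u, Some v => u = v | _, _ => False end
  | FNot g => ~ sat E env g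
  | FAnd g h => sat E env g /\ sat E env h
  | FOr g h => sat E env g \/ sat E env h
  | FAll g => forall v : V, sat E (v :: env) g
  | FEx g => exists v : V, sat E (v :: env) g
  end.

Fixpoint bounded (n : nat) (f : form) : bool :=
  match f with
  | FE i j | FEq i j => (i < n) && (j < n)
  | FNot g => bounded n g
  | FAnd g h | FOr g h => bounded n g && bounded n h
  | FAll g | FEx g => bounded n.+1 g
  end.

Definition sentence (f : form) : bool := bounded 0 f.

Fixpoint qfree (f : form) : bool :=
  match f with
  | FE _ _ | FEq _ _ => true
  | FNot g => qfree g
  | FAnd g h | FOr g h => qfree g && qfree h
  | FAll _ | FEx _ => false
  end.

Definition is_aa (phi : form) : Prop :=
  exists psi, phi = FAll (FAll psi) /\ qfree psi.

Definition basic (V : finType) (E : {set V * V}) : Prop :=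
  (forall u v, (u, v) \in E -> (v, u) \in E) /\ (forall u, (u, u) \notin E).

(* ||S|| = number of unordered pairs {u,v} with (u,v) in S *)
Definition normS (V : finType) (S : {set V * V}) : nat :=
  #|[set [set p.1; p.2] | p in S]|.

Definition models (V : finType) (E : {set V * V}) (phi : form) : Prop :=
  sat (fun u v => (u, v) \in E) [::] phi.

Inductive mode := Del | Add | Edit.

Definition RM (m : mode) (phi : form) (V : finType) (E : {set V * V}) (k : nat) : Prop :=
  exists S : {set V * V},
    [/\ normS S <= k,
        match m with
        | Del => S \subset E
        | Add => [disjoint S & E]
        | Edit => True
        end,
        basic ((E :\: S) :|: (S :\: E))
      & models ((E :\: S) :|: (S :\: E)) phi].

(* A wire reads either input bit i (inl i) or the value of gate j (inr j);
   a gate may only read earlier gates (later/absent gates read as false). *)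
Definition wire := (nat + nat)%type.

Inductive gate : Type :=
| GAnd : seq wire -> gate
| GOr  : seq wire -> gate
| GNot : wire -> gate
| GThr : nat -> seq wire -> gate.

Definition circuit := seq gate.

Definition wire_val (x : seq bool) (vals : seq bool) (w : wire) : bool :=
  match w with inl i => nth false x i | inr j => nth false vals j end.

Definition gate_val (x : seq bool) (vals : seq bool) (g : gate) : bool :=
  match g with
  | GAnd ws => all (wire_val x vals) ws
  | GOr ws => has (wire_val x vals) ws
  | GNot w => ~~ wire_val x vals w
  | GThr t ws => t <= count (wire_val x vals) ws
  end.

Definition gate_values (x : seq bool) (C : circuit) : seq bool :=
  foldl (fun vals g => rcons vals (gate_val x vals g)) [::] C.

Definition eval (C : circuit) (x : seq bool) : bool := last false (gate_values x C).

Definition wire_depth (ds : seq nat) (w : wire) : nat :=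
  match w with inl _ => 0 | inr j => nth 0 ds j end.

Definition gate_depth (ds : seq nat) (g : gate) : nat :=
  match g with
  | GAnd ws | GOr ws | GThr _ ws => (foldr maxn 0 (map (wire_depth ds) ws)).+1
  | GNot w => (wire_depth ds w).+1
  end.

Definition depth (C : circuit) : nat :=
  foldr maxn 0 (foldl (fun ds g => rcons ds (gate_depth ds g)) [::] C).

Definition gate_fanin (g : gate) : nat :=
  match g with GAnd ws | GOr ws | GThr _ ws => size ws | GNot _ => 1 end.

Definition csize (C : circuit) : nat := size C + sumn (map gate_fanin C).

(* A graph on V = 'I_n is given by its adjacency matrix (row-major, n*n bits),
   followed by k in binary with b bits (least significant bit first). *)
Definition enc (n b : nat) (E : {set 'I_n * 'I_n}) (k : nat) : seq bool :=
  [seq (i, j) \in E | i <- enum 'I_n, j <- enum 'I_n] ++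
  [seq odd (k %/ 2 ^ i) | i <- iota 0 b].

(* A graph problem with numeric parameter is in (non-uniform) TC^0 if there are
   constants d, c and, for every n and bit-length b, a threshold circuit of
   depth <= d and size <= c * (N+1)^c, N = n*n + b the input length, deciding
   the problem on all basic graphs on n vertices and all k < 2^b. *)
Definition in_TC0 (P : forall n : nat, {set 'I_n * 'I_n} -> nat -> Prop) : Prop :=
  exists d c : nat, forall n b : nat, exists C : circuit,
    [/\ depth C <= d, csize C <= c * (n * n + b).+1 ^ c
      & forall (E : {set 'I_n * 'I_n}) (k : nat), basic E -> k < 2 ^ b ->
          (eval C (enc b E k) = true <-> P n E k)].

From mathcomp Require Import all_boot zify.
Set Implicit Arguments. Unset Strict Implicit. Unset Printing Implicit Defensive.

(* On a basic graph a quantifier-free psi(x, y) only observes whether x = y and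
   whether xy is an edge, so among basic graphs on n vertices the sentence
   forall x forall y psi either has a constant truth value, or holds only in the
   complete graph, or holds only in the edgeless graph.  Reaching the unique target
   graph costs exactly its number of missing (resp. superfluous) edges, all of which
   are additions (resp. deletions); so every instance reduces to a constant or to
   comparing an edge count c with k (or with 0 when the needed edits are forbidden).
   Such a comparison is one threshold gate after a layer of negations:
   c <= k iff (P - c) + k >= P, where P is the number of vertex pairs. *)

Fixpoint qf_truth (psi : form) (same adj : bool) : bool :=
  match psi with
  | FE i j => (i != j) && adj
  | FEq i j => (i == j) || same
  | FNot g => ~~ qf_truth g same adj
  | FAnd g h => qf_truth g same adj && qf_truth h same adj
  | FOr g h => qf_truth g same adj || qf_truth h same adj
  | FAll _ | FEx _ => false
  end.

Lemma sat_qf_truth (V : finType) (E : {set V * V}) psi u v :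
  basic E -> qfree psi -> bounded 2 psi ->
  sat (fun a b => (a, b) \in E) [:: u; v] psi <-> qf_truth psi (u == v) ((u, v) \in E).
Proof.
move=> [E_sym E_irr]; elim: psi => //=.
- move=> i j _ /andP[lt_i lt_j].
  have symE : ((v, u) \in E) = ((u, v) \in E) by apply/idP/idP => /E_sym.
  by case: i lt_i => [|[|i]] // _; case: j lt_j => [|[|j]] // _ /=;
    rewrite ?symE ?(negbTE (E_irr u)) ?(negbTE (E_irr v)).
- move=> i j _ /andP[lt_i lt_j].
  by case: i lt_i => [|[|i]] // _; case: j lt_j => [|[|j]] // _ /=;
    split => [->|/eqP ->].
- by move=> g IH qf_g b_g; rewrite IH //; split => [/negP|/negP].
- move=> g IHg h IHh /andP[qf_g qf_h] /andP[b_g b_h].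
  by rewrite IHg // IHh //; split => [[-> ->]|/andP].
- move=> g IHg h IHh /andP[qf_g qf_h] /andP[b_g b_h].
  by rewrite IHg // IHh //; split => [[->|->]|/orP]; rewrite ?orbT.
Qed.

Lemma models_aa (V : finType) (E : {set V * V}) psi :
  basic E -> qfree psi -> bounded 2 psi ->
  models E (FAll (FAll psi)) <->
  forall u v, if u == v then qf_truth psi true false
              else if (u, v) \in E then qf_truth psi false true
              else qf_truth psi false false.
Proof.
move=> E_basic qf_psi b_psi.
have qf_pair u v : qf_truth psi (u == v) ((u, v) \in E) =
    if u == v then qf_truth psi true false
    else if (u, v) \in E then qf_truth psi false true else qf_truth psi false false.
  by case: eqP => [->|_]; [rewrite (negbTE (E_basic.2 v)) | case: (_ \in _)].
rewrite /models /=; split => [sat_all u v | all_pairs v u].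
  by rewrite -qf_pair; apply/sat_qf_truth.
by apply/sat_qf_truth => //; rewrite qf_pair.
Qed.

Definition complete n : {set 'I_n * 'I_n} := [set p : 'I_n * 'I_n | p.1 != p.2].

Lemma models_aa_cases n psi : qfree psi -> bounded 2 psi ->
  [\/ exists c : bool,
        forall E : {set 'I_n * 'I_n}, basic E -> models E (FAll (FAll psi)) <-> c,
      forall E : {set 'I_n * 'I_n}, basic E -> models E (FAll (FAll psi)) <-> E = complete n
    | forall E : {set 'I_n * 'I_n}, basic E -> models E (FAll (FAll psi)) <-> E = set0].
Proof.
move=> qf_psi b_psi.
case loop: (qf_truth psi true false); last first.
  apply: Or31; exists (n == 0) => E E_basic; rewrite models_aa // loop.
  split=> [all_pairs | /eqP n0 u]; last by have := ltn_ord u; rewrite {2}n0.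
  case: (posnP n) => // n_gt0.
  by have := all_pairs (Ordinal n_gt0) (Ordinal n_gt0); rewrite eqxx.
case adj: (qf_truth psi false true); case nonadj: (qf_truth psi false false).
- apply: Or31; exists true => E E_basic; rewrite models_aa //.
  by split=> // _ u v; rewrite adj nonadj; case: eqP; case: ((u, v) \in E).
- apply: Or32 => E E_basic; rewrite models_aa // adj nonadj.
  split=> [all_pairs | -> u v]; last by rewrite inE; case: eqP.
  apply/setP => -[u v]; rewrite inE /=; have := all_pairs u v.
  by case: eqP => [-> _|_]; [rewrite (negbTE (E_basic.2 v)) | case: (_ \in _)].
- apply: Or33 => E E_basic; rewrite models_aa // adj nonadj.
  split=> [all_pairs | -> u v]; last by rewrite inE; case: eqP.
  apply/setP => -[u v]; rewrite inE /=; have := all_pairs u v.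
  by case: eqP => [-> _|_]; [rewrite (negbTE (E_basic.2 v)) | case: (_ \in _)].
- apply: Or31; exists (n <= 1) => E E_basic; rewrite models_aa // adj nonadj.
  split=> [all_pairs | le_n1 u v].
    case: (leqP n 1) => // gt_n1.
    by have := all_pairs (Ordinal (ltnW gt_n1)) (Ordinal gt_n1); rewrite if_same.
  have -> : u = v by apply: ord_inj; move: (ltn_ord u) (ltn_ord v); lia.
  by rewrite eqxx.
Qed.

Definition upper n : {set 'I_n * 'I_n} := [set p : 'I_n * 'I_n | p.1 < p.2].

Definition upper_count n (edges : bool) (E : {set 'I_n * 'I_n}) : nat :=
  #|if edges then upper n :&: E else upper n :\: E|.

Lemma upper_count_compl n edges (E : {set 'I_n * 'I_n}) :
  upper_count edges E + upper_count (~~ edges) E = #|upper n|.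
Proof.
by rewrite /upper_count -(cardsID E (upper n)); case: edges => //; rewrite addnC.
Qed.

Lemma card_upper_leq n : #|upper n| <= n * n.
Proof. by apply: leq_trans (max_card _) _; rewrite card_prod card_ord. Qed.

Lemma normS_eq0 (V : finType) (S : {set V * V}) : (normS S == 0) = (S == set0).
Proof. by rewrite /normS cards_eq0 imset_eq0. Qed.

Lemma upper_pair_inj n :
  {in upper n &, injective (fun p : 'I_n * 'I_n => [set p.1; p.2])}.
Proof.
move=> [a b] [c d]; rewrite !inE /= => lt_ab lt_cd eq_ab_cd.
have := set21 a b; have := set22 a b; rewrite eq_ab_cd !in_set2.
case/orP => /eqP eq_b; case/orP => /eqP eq_a; subst => //.
all: by rewrite ?ltnn // ltnNge ltnW in lt_ab.
Qed.

Lemma normS_upper n (S : {set 'I_n * 'I_n}) : basic S -> normS S = #|S :&: upper n|.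
Proof.
move=> [S_sym S_irr].
have inj : {in S :&: upper n &, injective (fun p : 'I_n * 'I_n => [set p.1; p.2])}.
  by apply: sub_in2 (@upper_pair_inj n) => p; rewrite inE => /andP[].
rewrite /normS -(card_in_imset inj); apply: eq_card => X.
apply/imsetP/imsetP => -[[u v] uv_in ->].
  case: (ltngtP u v) => [lt_uv | lt_vu | /val_inj eq_uv].
  - by exists (u, v); rewrite // !inE uv_in.
  - by exists (v, u); [rewrite !inE S_sym | rewrite /= setUC].
  - by move: uv_in; rewrite eq_uv (negbTE (S_irr v)).
by exists (u, v); move: uv_in; rewrite inE => /andP[].
Qed.

Lemma symdiffK (T : finType) (A B : {set T}) :
  (A :\: ((A :\: B) :|: (B :\: A))) :|: (((A :\: B) :|: (B :\: A)) :\: A) = B.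
Proof. by apply/setP => x; rewrite !inE; case: (x \in A); case: (x \in B). Qed.

Lemma disjoint_sub_eq0 (T : finType) (A B : {set T}) :
  A \subset B -> [disjoint A & B] -> A = set0.
Proof. by move=> /setIidPl sub_AB /disjoint_setI0; rewrite sub_AB. Qed.

Definition edit_ok (m : mode) (V : finType) (S E : {set V * V}) : Prop :=
  match m with Del => S \subset E | Add => [disjoint S & E] | Edit => True end.

Lemma RM_unique_model m phi n (E T : {set 'I_n * 'I_n}) k :
  basic T -> (forall E' : {set 'I_n * 'I_n}, basic E' -> models E' phi <-> E' = T) ->
  RM m phi E k <->
  normS ((E :\: T) :|: (T :\: E)) <= k /\ edit_ok m ((E :\: T) :|: (T :\: E)) E.
Proof.
move=> T_basic T_unique; split.
  move=> [S [le_k ok S_basic S_models]].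
  have <- : (E :\: S) :|: (S :\: E) = T by apply/T_unique.
  by rewrite symdiffK.
move=> [le_k ok]; exists ((E :\: T) :|: (T :\: E)); rewrite symdiffK.
by split=> //; apply/T_unique.
Qed.

Lemma RM_const m phi n (E : {set 'I_n * 'I_n}) k (c : Prop) : basic E ->
  (forall E' : {set 'I_n * 'I_n}, basic E' -> models E' phi <-> c) ->
  RM m phi E k <-> c.
Proof.
move=> E_basic models_c; split=> [[S [_ _ S_basic S_models]] | ].
  exact/(models_c _ S_basic).
move=> /(models_c _ E_basic) E_models; exists set0.
rewrite setD0 set0D setU0 /normS imset0 cards0; split=> //.
by case: m; rewrite /= ?sub0set // -setI_eq0 set0I.
Qed.

Lemma basic_complete n : basic (complete n).
Proof. by split=> [u v|u]; rewrite !inE /= ?eqxx // [v == u]eq_sym. Qed.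

Lemma basic_set0 (V : finType) : basic (set0 : {set V * V}).
Proof. by split=> [u v|u]; rewrite !inE. Qed.

Lemma RM_complete m phi n (E : {set 'I_n * 'I_n}) k : basic E ->
  (forall E' : {set 'I_n * 'I_n}, basic E' -> models E' phi <-> E' = complete n) ->
  RM m phi E k <-> upper_count false E <= (if m is Del then 0 else k).
Proof.
move=> [E_sym E_irr] complete_unique.
rewrite (RM_unique_model _ _ _ (basic_complete n) complete_unique).
have -> : (E :\: complete n) :|: (complete n :\: E) = complete n :\: E.
  apply/setP => -[u v]; rewrite !inE /=.
  by case: eqP => [->|]; rewrite ?(negbTE (E_irr v)) ?andbF.
have missing_basic : basic (complete n :\: E).
  split=> [u v|u]; rewrite !inE /= ?eqxx ?andbF // eq_sym => /andP[uv_notin ->].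
  by rewrite andbT; apply/negP => /E_sym; apply/negP.
have norm_missing : normS (complete n :\: E) = upper_count false E.
  rewrite normS_upper // /upper_count; apply: eq_card => -[u v]; rewrite !inE /= -andbA.
  congr (_ && _); apply/andb_idl => lt_uv; apply/eqP => eq_uv.
  by rewrite eq_uv ltnn in lt_uv.
have missing_disj : [disjoint complete n :\: E & E].
  by rewrite disjoints_subset setDE subsetIr.
rewrite -norm_missing; case: m => /=; try by split=> [[]|].
split=> [[_ missing_sub] | le_0].
  by rewrite leqn0 normS_eq0 (disjoint_sub_eq0 missing_sub missing_disj).
have -> : complete n :\: E = set0 by apply/eqP; rewrite -normS_eq0 -leqn0.
by rewrite /normS imset0 cards0 sub0set.
Qed.

Lemma RM_empty m phi n (E : {set 'I_n * 'I_n}) k : basic E ->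
  (forall E' : {set 'I_n * 'I_n}, basic E' -> models E' phi <-> E' = set0) ->
  RM m phi E k <-> upper_count true E <= (if m is Add then 0 else k).
Proof.
move=> E_basic empty_unique.
rewrite (RM_unique_model _ _ _ (basic_set0 _) empty_unique) setD0 set0D setU0.
have norm_E : normS E = upper_count true E by rewrite normS_upper // setIC.
rewrite -norm_E; case: m => /=; try by split=> [[]|].
split=> [[_ E_disj] | le_0].
  by rewrite leqn0 normS_eq0 (disjoint_sub_eq0 (subxx E) E_disj).
have -> : E = set0 by apply/eqP; rewrite -normS_eq0 -leqn0.
by rewrite /normS imset0 cards0 -setI_eq0 set0I.
Qed.

Definition thr_circuit (negs : seq nat) (t : nat) (ws : seq wire) : circuit :=
  rcons [seq GNot (inl i) | i <- negs] (GThr t ws).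

Lemma foldl_not_layer x vals negs :
  foldl (fun vals g => rcons vals (gate_val x vals g)) vals [seq GNot (inl i) | i <- negs]
  = vals ++ [seq ~~ nth false x i | i <- negs].
Proof. by elim: negs vals => [|i negs IH] vals /=; rewrite ?cats0 // IH cat_rcons. Qed.

Lemma eval_thr_circuit negs t ws x :
  eval (thr_circuit negs t ws) x =
  (t <= count (wire_val x [seq ~~ nth false x i | i <- negs]) ws).
Proof. by rewrite /eval /gate_values foldl_rcons foldl_not_layer last_rcons. Qed.

Lemma foldl_not_layer_depth ds negs :
  foldl (fun ds g => rcons ds (gate_depth ds g)) ds [seq GNot (inl i) | i <- negs]
  = ds ++ nseq (size negs) 1.
Proof. by elim: negs ds => [|i negs IH] ds /=; rewrite ?cats0 // IH cat_rcons. Qed.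

Lemma foldr_maxn_leq d s : (foldr maxn 0 s <= d) = all (leq^~ d) s.
Proof. by elim: s => //= a s IH; rewrite geq_max IH. Qed.

Lemma depth_thr_circuit negs t ws : depth (thr_circuit negs t ws) <= 2.
Proof.
rewrite /depth foldl_rcons foldl_not_layer_depth /= foldr_maxn_leq all_rcons.
rewrite all_nseq orbT andbT ltnS foldr_maxn_leq all_map.
by apply/allP => -[//|j] _ /=; rewrite nth_nseq; case: ifP.
Qed.

Lemma csize_thr_circuit negs t ws :
  csize (thr_circuit negs t ws) = (size negs).*2 + (size ws).+1.
Proof.
rewrite /csize size_rcons size_map map_rcons -cats1 sumn_cat -map_comp /=.
have -> : sumn [seq 1 | _ <- negs] = size negs by elim: negs => //= _ s ->.
by rewrite -addnn; lia.
Qed.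

Lemma nth_allpairs (S T R : Type) (f : S -> T -> R) (s : seq S) (t : seq T)
    x0 y0 z0 i j :
  i < size s -> j < size t ->
  nth z0 [seq f x y | x <- s, y <- t] (i * size t + j) = f (nth x0 s i) (nth y0 t j).
Proof.
elim: s i => [|a s IH] [|i] // lt_i lt_j; rewrite allpairs_cons nth_cat size_map.
  by rewrite lt_j (nth_map y0).
by rewrite mulSn -addnA ltnNge leq_addr /= addKn IH.
Qed.

Definition pair_index n (p : 'I_n * 'I_n) : nat := p.1 * n + p.2.

Lemma pair_index_lt n (p : 'I_n * 'I_n) : pair_index p < n * n.
Proof. by case: p => -[i lt_i] [j lt_j]; rewrite /pair_index /=; nia. Qed.

Lemma nth_enc_edge n b (E : {set 'I_n * 'I_n}) k p :
  nth false (enc b E k) (pair_index p) = (p \in E).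
Proof.
rewrite /enc nth_cat size_allpairs size_enum_ord pair_index_lt.
case: p => i j; rewrite /pair_index /=.
have := @nth_allpairs _ _ _ (fun i j => (i, j) \in E) (enum 'I_n) (enum 'I_n) i j false i j.
by rewrite size_enum_ord !nth_ord_enum; apply.
Qed.

Lemma nth_enc_bit n b (E : {set 'I_n * 'I_n}) k i : i < b ->
  nth false (enc b E k) (n * n + i) = odd (k %/ 2 ^ i).
Proof.
move=> lt_i_b; rewrite /enc nth_cat size_allpairs size_enum_ord ltnNge leq_addr /=.
by rewrite addKn (nth_map 0) ?size_iota // nth_iota.
Qed.

Lemma binary_expansion b k : k < 2 ^ b ->
  \sum_(0 <= i < b) 2 ^ i * odd (k %/ 2 ^ i) = k.
Proof.
elim: b k => [|b IH] k lt_k.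
  by rewrite big_geq //; move: lt_k; rewrite expn0; case: k.
rewrite big_nat_recl // expn0 divn1 mul1n.
have -> : \sum_(0 <= i < b) 2 ^ i.+1 * odd (k %/ 2 ^ i.+1)
        = 2 * \sum_(0 <= i < b) 2 ^ i * odd (k %/ 2 %/ 2 ^ i).
  by rewrite big_distrr /=; apply: eq_bigr => i _; rewrite expnS -divnMA mulnA.
rewrite IH; last by rewrite ltn_divLR // mulnC -expnS.
by rewrite {3}(divn_eq k 2) modn2 mulnC addnC.
Qed.

Definition capped_value (W b k : nat) : nat :=
  \sum_(0 <= i < b) odd (k %/ 2 ^ i) * minn (2 ^ i) W.

Lemma minn_sum_leq (a : nat -> nat) W b :
  minn (\sum_(0 <= i < b) a i) W <= \sum_(0 <= i < b) minn (a i) W.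
Proof.
elim: b => [|b IH]; first by rewrite !big_geq // min0n.
by rewrite !big_nat_recr //=; lia.
Qed.

Lemma capped_value_bounds W b k : k < 2 ^ b ->
  minn k W <= capped_value W b k <= k.
Proof.
move=> lt_k; set a := fun i => 2 ^ i * odd (k %/ 2 ^ i).
have -> : capped_value W b k = \sum_(0 <= i < b) minn (a i) W.
  apply: eq_bigr => i _; rewrite /a.
  by case: (odd _); rewrite ?muln0 ?muln1 ?mul0n ?mul1n ?min0n.
rewrite -[in minn k W](binary_expansion lt_k) minn_sum_leq /=.
by rewrite -[leqRHS](binary_expansion lt_k); apply: leq_sum => i _; apply: geq_minl.
Qed.

Lemma leq_capped_value W b k s : k < 2 ^ b -> s <= W ->
  (s <= capped_value W b k) = (s <= k).
Proof. by move=> /(capped_value_bounds W) bounds le_s_W; apply/idP/idP; lia. Qed.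

(* [inr j] is the j-th gate of the negation layer of [le_circuit] below, which
   negates the input bit of the j-th pair of [upper n]. *)
Definition pair_wires n (edges : bool) : seq wire :=
  if edges then [seq inl (pair_index p) | p <- enum (upper n)]
  else [seq inr j | j <- iota 0 #|upper n|].

Lemma size_pair_wires n edges : size (pair_wires n edges) = #|upper n|.
Proof. by rewrite /pair_wires cardE; case: edges; rewrite size_map ?size_iota ?cardE. Qed.

Lemma card_setI_count (T : finType) (A B : {set T}) : #|A :&: B| = count [in B] (enum A).
Proof. by rewrite cardE (perm_size (enum_setI _ _)) size_filter. Qed.

Lemma count_pair_wires n b edges (E : {set 'I_n * 'I_n}) k
    (x := enc b E k) (negs := [seq ~~ nth false x (pair_index p) | p <- enum (upper n)]) :
  count (wire_val x negs) (pair_wires n edges) = upper_count edges E.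
Proof.
rewrite /pair_wires /upper_count; case: edges.
  by rewrite card_setI_count count_map; apply: eq_count => p; rewrite /= nth_enc_edge.
have -> : #|upper n| = size negs by rewrite size_map cardE.
have -> : count (wire_val x negs) [seq inr j | j <- iota 0 (size negs)] = count id negs.
  by rewrite -[in RHS](mkseq_nth false negs) /mkseq !count_map.
rewrite setDE card_setI_count count_map; apply: eq_count => p.
by rewrite /= nth_enc_edge inE.
Qed.

(* Bit i of k is read min(2^i, n*n + 1) times: this keeps the circuit polynomial
   and does not affect comparisons of k with numbers at most n*n. *)
Definition bit_wires n b : seq wire :=
  flatten [seq nseq (minn (2 ^ i) (n * n).+1) (inl (n * n + i)) | i <- iota 0 b].

Lemma count_bit_wires n b (E : {set 'I_n * 'I_n}) k vals :
  count (wire_val (enc b E k) vals) (bit_wires n b) = capped_value (n * n).+1 b k.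
Proof.
rewrite count_flatten -map_comp sumnE big_map /capped_value /index_iota subn0.
apply: eq_big_seq => i; rewrite mem_iota add0n => /andP[_ lt_i_b].
by rewrite /= count_nseq /= nth_enc_bit.
Qed.

Lemma size_bit_wires n b : size (bit_wires n b) <= b * (n * n).+1.
Proof.
rewrite size_flatten /shape -map_comp sumnE big_map.
apply: (@leq_trans (\sum_(i <- iota 0 b) (n * n).+1)).
  by apply: leq_sum => i _; rewrite /= size_nseq geq_minr.
by rewrite big_const_seq count_predT size_iota iter_addn_0 mulnC.
Qed.

Definition le_circuit n b (edges usek : bool) : circuit :=
  thr_circuit [seq pair_index p | p <- enum (upper n)] #|upper n|
    (pair_wires n (~~ edges) ++ (if usek then bit_wires n b else [::])).

Lemma eval_le_circuit n b edges usek (E : {set 'I_n * 'I_n}) k : k < 2 ^ b ->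
  eval (le_circuit n b edges usek) (enc b E k) =
  (upper_count edges E <= (if usek then k else 0)).
Proof.
move=> lt_k; rewrite eval_thr_circuit count_cat -map_comp count_pair_wires.
rewrite -(upper_count_compl edges E) addnC leq_add2l.
case: usek; rewrite ?count_bit_wires ?leq_capped_value //.
apply: leq_trans (leq_addr (upper_count (~~ edges) E) _) _.
by rewrite upper_count_compl ltnW // ltnS card_upper_leq.
Qed.

Lemma csize_le_circuit n b edges usek :
  csize (le_circuit n b edges usek) <= 2 * (n * n + b).+1 ^ 2.
Proof.
rewrite csize_thr_circuit size_cat !size_map size_pair_wires -cardE.
have le_bits : size (if usek then bit_wires n b else [::]) <= b * (n * n).+1.
  by case: usek; rewrite ?size_bit_wires.
move: le_bits (card_upper_leq n).
move: (size _) #|upper n| (n * n) => s P nn; rewrite -addnn !expnS expn0 muln1; nia.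
Qed.

Theorem lemma4p10 (m : mode) (phi : form) :
  sentence phi -> is_aa phi ->
  in_TC0 (fun n (E : {set 'I_n * 'I_n}) k => RM m phi E k).
Proof.
move=> phi_sentence [psi [phi_eq psi_qf]]; subst phi.
have psi_b2 : bounded 2 psi := phi_sentence.
exists 2, 2 => n b.
have [[c models_c] | models_complete | models_empty] := models_aa_cases n psi_qf psi_b2.
- exists (thr_circuit [::] (~~ c) [::]); split.
  + exact: depth_thr_circuit.
  + by rewrite csize_thr_circuit muln_gt0 expn_gt0.
  + move=> E k E_basic _; rewrite eval_thr_circuit (RM_const _ _ E_basic models_c).
    by case: (c).
- exists (le_circuit n b false (if m is Del then false else true)); split.
  + exact: depth_thr_circuit.
  + exact: csize_le_circuit.
  + move=> E k E_basic lt_k.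
    rewrite eval_le_circuit // (RM_complete _ _ E_basic models_complete).
    by case: m.
- exists (le_circuit n b true (if m is Add then false else true)); split.
  + exact: depth_thr_circuit.
  + exact: csize_le_circuit.
  + move=> E k E_basic lt_k.
    rewrite eval_le_circuit // (RM_empty _ _ E_basic models_empty).
    by case: m.
Qed.
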